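(* Let $\mathcal{X}\subset\mathbb{R}^d$ be a full-dimensional polytope with vertex set $\mathcal{V}$ and let ${\bm{u}}\in\mathbb{R}^d$. Then every inclusion-wise minimal optimal spanning set of ${\bm{u}}$ has exactly $d+1$ elements, and hence is an affine basis of $\mathcal{X}$.
   Context: For ${\bm{u}}\in\mathbb{R}^d$ write ${\bm{x}}\succeq{\bm{x}}'$ if $\langle{\bm{u}},{\bm{x}}\rangle\ge\langle{\bm{u}},{\bm{x}}'\rangle$. For a finite $B\subseteq\mathcal{X}$ and ${\bm{x}}\in\mathbb{R}^d$ let $B_{\succeq{\bm{x}}}=\{{\bm{x}}'\in B:\langle{\bm{u}},{\bm{x}}'-{\bm{x}}\rangle\ge0\}$. A finite set $B\subseteq\mathcal{X}$ is an optimal spanning set of ${\bm{u}}$ if every vertex ${\bm{x}}\in\mathcal{V}$ lies in the affine hull of $B_{\succeq{\bm{x}}}$. *)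

From HB Require Import structures.
From mathcomp Require Import all_boot all_order all_algebra.
From mathcomp Require Import reals.
Set Implicit Arguments. Unset Strict Implicit. Unset Printing Implicit Defensive.
Import Order.TTheory GRing.Theory Num.Theory.
Local Open Scope ring_scope.

Section Defs.
Variables (R : realType) (d : nat).
Local Notation vec := 'rV[R]_d.

Definition dotv (u x : vec) : R := \sum_(i < d) u 0 i * x 0 i.

Definition conv_hull (P : seq vec) (x : vec) : Prop :=
  exists w : 'I_(size P) -> R,
    (forall i, 0 <= w i) /\ \sum_i w i = 1 /\ x = \sum_i w i *: P`_i.

Definition aff_comb (s : seq vec) (x : vec) : Prop :=
  exists w : 'I_(size s) -> R, \sum_i w i = 1 /\ x = \sum_i w i *: s`_i.

Definition affine_hull (S : vec -> Prop) (x : vec) : Prop :=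
  exists s : seq vec, (forall y, y \in s -> S y) /\ aff_comb s x.

Definition full_dimensional (S : vec -> Prop) : Prop :=
  forall x, affine_hull S x.

Definition is_vertex (S : vec -> Prop) (x : vec) : Prop :=
  S x /\ forall (y z : vec) (t : R), S y -> S z -> 0 < t < 1 ->
    x = t *: y + (1 - t) *: z -> y = x /\ z = x.

Definition B_ge (u : vec) (B : seq vec) (x : vec) : seq vec :=
  [seq y <- B | 0 <= dotv u (y - x)].

Definition optimal_spanning_set (X : vec -> Prop) (u : vec) (B : seq vec) : Prop :=
  uniq B /\ (forall y, y \in B -> X y) /\
  forall x, is_vertex X x -> aff_comb (B_ge u B x) x.

Definition minimal_optimal_spanning_set (X : vec -> Prop) (u : vec) (B : seq vec) : Prop :=
  optimal_spanning_set X u B /\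
  forall B' : seq vec, uniq B' -> {subset B' <= B} -> ~ {subset B <= B'} ->
    ~ optimal_spanning_set X u B'.

Definition aff_indep (s : seq vec) : Prop :=
  forall w : 'I_(size s) -> R, \sum_i w i = 0 -> \sum_i w i *: s`_i = 0 ->
    forall i, w i = 0.

Definition affine_basis (X : vec -> Prop) (B : seq vec) : Prop :=
  aff_indep B /\ forall x, aff_comb B x <-> affine_hull X x.

End Defs.

(* A minimal optimal spanning set [B] is affinely independent: in an affine dependence, the
   point [b] with nonzero coefficient and least value of [<u, .>] is an affine combination of
   points of [B] with larger value, so each of them lies in [B_{>= x}] whenever [b] does, and
   [B \ {b}] is still an optimal spanning set. On the other hand [B] affinely spans every
   vertex, and a polytope is the convex hull of its vertices, so full dimensionality makes [B]
   affinely span R^d; an affinely independent set spanning R^d has d+1 points. *)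

From HB Require Import structures.
From mathcomp Require Import all_boot all_order all_algebra.
From mathcomp Require Import reals.
From Stdlib Require Import Classical.
From mathcomp Require Import lra.
Set Implicit Arguments. Unset Strict Implicit. Unset Printing Implicit Defensive.
Import Order.TTheory GRing.Theory Num.Theory.
Local Open Scope ring_scope.

Section AffineHull.
Variables (R : realType) (d : nat).
Implicit Types (s t : seq 'rV[R]_d) (x y : 'rV[R]_d).

(* Homogenisation: affine combinations of points are linear combinations of their lifts. *)
Definition liftv x : 'rV[R]_(d + 1) := row_mx x (const_mx 1).

Lemma sum_scale_liftv n (w : 'I_n -> R) (f : 'I_n -> 'rV[R]_d) :
  \sum_i w i *: liftv (f i) = row_mx (\sum_i w i *: f i) (const_mx (\sum_i w i)).
Proof.
apply/rowP => j; rewrite summxE !mxE; under eq_bigr => i _ do rewrite !mxE.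
case: splitP => k _; rewrite ?summxE /=.
  by apply: eq_bigr => i _; rewrite mxE.
by rewrite !mxE; apply: eq_bigr => i _; rewrite mulr1.
Qed.

Lemma row_mx_const_inj (a a' : 'rV[R]_d) (c c' : R) :
  row_mx a (const_mx c : 'rV_1) = row_mx a' (const_mx c') -> a = a' /\ c = c'.
Proof. by move=> /eq_row_mx [-> /rowP /(_ ord0)]; rewrite !mxE. Qed.

Lemma aff_comb_liftv s x : aff_comb s x <-> liftv x \in <<map liftv s>>%VS.
Proof.
pose X := map_tuple liftv (in_tuple s).
have nthX (i : 'I_(size s)) : X`_i = liftv s`_i by rewrite (nth_map 0).
split=> [[w [w1 ->]] | xs].
  have -> : liftv (\sum_i w i *: s`_i) = \sum_i w i *: liftv s`_i.
    by rewrite sum_scale_liftv w1.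
  by rewrite rpred_sum // => i _; rewrite memvZ // memv_span // map_f ?mem_nth.
have xE := coord_span (X := X) xs.
exists (fun i => coord X i (liftv x)).
have [xE1 k1] : x = \sum_i coord X i (liftv x) *: s`_i /\ 1 = \sum_i coord X i (liftv x).
  apply: row_mx_const_inj; rewrite -sum_scale_liftv [LHS]xE.
  by apply: eq_bigr => i _; rewrite nthX.
by rewrite -k1 -xE1.
Qed.

Lemma aff_comb_mem s x : x \in s -> aff_comb s x.
Proof. by move=> xs; apply/aff_comb_liftv; rewrite memv_span ?map_f. Qed.

Lemma aff_comb_trans s t x :
  (forall y, y \in s -> aff_comb t y) -> aff_comb s x -> aff_comb t x.
Proof.
move=> st /aff_comb_liftv xs; apply/aff_comb_liftv; apply: subvP xs.
by apply/span_subvP => _ /mapP [y ys ->]; apply/aff_comb_liftv/st.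
Qed.

Lemma aff_comb_sub s t x : {subset s <= t} -> aff_comb s x -> aff_comb t x.
Proof. by move=> st; apply: aff_comb_trans => y /st; apply: aff_comb_mem. Qed.

Lemma span_liftv_full s : (forall x, aff_comb s x) -> <<map liftv s>>%VS = fullv.
Proof.
move=> sfull; apply/eqP; rewrite eqEsubv subvf; apply/subvP => v _.
have -> : v = liftv (lsubmx v) + (rsubmx v 0 0 - 1) *: liftv 0.
  apply/rowP => j; rewrite !mxE; case: splitP => k jk; rewrite !mxE.
    by rewrite mulr0 addr0 (_ : j = lshift 1 k) //; apply: val_inj.
  rewrite mulr1 addrC subrK (_ : j = rshift d k); last exact: val_inj.
  by rewrite (ord1 k).
by rewrite memvD ?memvZ //; apply/aff_comb_liftv.
Qed.

Lemma aff_indep_free s : aff_indep s -> free (map liftv s).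
Proof.
move=> sind; apply/(freeP (X := map_tuple liftv (in_tuple s))) => k k0 i.
have [k0v k1] : \sum_j k j *: s`_j = 0 /\ \sum_j k j = 0.
  apply: row_mx_const_inj; rewrite -sum_scale_liftv.
  have -> : row_mx 0 (const_mx 0) = 0 :> 'rV[R]_(d + 1) by apply: row_mx0.
  by rewrite -[RHS]k0; apply: eq_bigr => j _; rewrite (nth_map 0).
exact: sind.
Qed.

Lemma size_aff_indep_full s :
  aff_indep s -> (forall x, aff_comb s x) -> size s = d.+1.
Proof.
move=> sind sfull; have := aff_indep_free sind.
rewrite /free span_liftv_full // dimvf size_map dim_matrix mul1r addn1.
by move=> /eqP.
Qed.

End AffineHull.

Section ConvexHull.
Variables (R : realType) (d : nat).
Implicit Types (P V : seq 'rV[R]_d) (p x : 'rV[R]_d).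

Lemma conv_hull_aff_comb P x : conv_hull P x -> aff_comb P x.
Proof. by move=> [w [_ wx]]; exists w. Qed.

Lemma sum_scale_support1 P p (a : 'I_(size P) -> R) :
  (forall i : 'I_(size P), P`_i != p -> a i = 0) ->
  \sum_i a i = 1 -> \sum_i a i *: P`_i = p.
Proof.
move=> a0 a1; rewrite -[RHS]scale1r -a1 scaler_suml; apply: eq_bigr => i _.
by have [-> // | /a0 ->] := eqVneq P`_i p; rewrite !scale0r.
Qed.

Lemma conv_hull_mem P x : x \in P -> conv_hull P x.
Proof.
rewrite -index_mem => xP; pose i0 := Ordinal xP.
have delta1 : \sum_i (i == i0)%:R = 1 :> R.
  by rewrite (bigD1 i0) //= eqxx big1 ?addr0 // => i /negPf ->.
exists (fun i => (i == i0)%:R); split=> [i|]; first exact: ler0n.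
split=> //; apply/esym/sum_scale_support1 => // i.
by case: (i =P i0) => [-> | //]; rewrite nth_index ?eqxx // -index_mem.
Qed.

Lemma conv_hull_convex P n (w : 'I_n -> R) (f : 'I_n -> 'rV[R]_d) :
  (forall j, 0 <= w j) -> \sum_j w j = 1 ->
  (forall j, w j != 0 -> conv_hull P (f j)) -> conv_hull P (\sum_j w j *: f j).
Proof.
move=> w0 w1 fP.
have /fin_all_exists [v vE] : forall j, exists vj : 'I_(size P) -> R, w j != 0 ->
    [/\ forall i, 0 <= vj i, \sum_i vj i = 1 & f j = \sum_i vj i *: P`_i].
  move=> j; have [_|/fP [vj [vj0 [vj1 fjE]]]] := eqVneq (w j) 0.
    by exists (fun _ => 0).
  by exists vj.
exists (fun i => \sum_j w j * v j i); split; [|split].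
- move=> i; apply: sumr_ge0 => j _; have [->|/vE[vj0 _ _]] := eqVneq (w j) 0.
    by rewrite mul0r.
  by rewrite mulr_ge0.
- rewrite exchange_big /= -[RHS]w1; apply: eq_bigr => j _; rewrite -mulr_sumr.
  by have [->|/vE[_ -> _]] := eqVneq (w j) 0; rewrite ?mul0r ?mulr1.
- under [RHS]eq_bigr => i _ do rewrite scaler_suml.
  rewrite exchange_big /=; apply: eq_bigr => j _.
  have [->|/vE[_ _ ->]] := eqVneq (w j) 0.
    by rewrite scale0r big1 // => i _; rewrite mul0r scale0r.
  by rewrite scaler_sumr; apply: eq_bigr => i _; rewrite scalerA.
Qed.

Lemma conv_hull_trans P V x :
  (forall y, y \in P -> conv_hull V y) -> conv_hull P x -> conv_hull V x.
Proof.
move=> PV [w [w0 [w1 ->]]]; apply: conv_hull_convex => // j _.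
by apply: PV; rewrite mem_nth.
Qed.

(* If the weights of [p] put positive mass outside [p], renormalising that part writes [p]
   as a convex combination of the other points. *)
Lemma conv_hull_filter_neq P p (g : 'I_(size P) -> R) :
  (forall i, 0 <= g i) -> \sum_i g i = 1 -> p = \sum_i g i *: P`_i ->
  (exists2 i : 'I_(size P), P`_i != p & g i != 0) ->
  conv_hull [seq y <- P | y != p] p.
Proof.
move=> g0 g1 pE [i0 Pi0 gi0].
set r := \sum_(i < size P | P`_i != p) g i.
have r_gt0 : 0 < r.
  rewrite /r (bigD1 i0) //=; apply: ltr_pwDl; first by rewrite lt_def gi0 g0.
  exact: sumr_ge0.
have rest : \sum_(i < size P | P`_i != p) g i *: P`_i = r *: p.
  have := pE; rewrite (bigID (fun i : 'I_(size P) => P`_i == p)) /=.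
  have -> : \sum_(i < size P | P`_i == p) g i *: P`_i = (1 - r) *: p.
    rewrite -g1 [\sum_i g i](bigID (fun i : 'I_(size P) => P`_i == p)) /= -/r addrK.
    by rewrite scaler_suml; apply: eq_bigr => i /eqP ->.
  by move=> pE'; apply: (addrI ((1 - r) *: p)); rewrite -pE' scalerBl scale1r subrK.
pose w (i : 'I_(size P)) := if P`_i != p then g i / r else 0.
have wP (i : 'I_(size P)) : w i != 0 -> P`_i \in [seq y <- P | y != p].
  by rewrite /w mem_filter mem_nth // andbT; case: ifP => // _; rewrite eqxx.
have w0 i : 0 <= w i by rewrite /w; case: ifP => // _; rewrite divr_ge0 // ltW.
have w1 : \sum_i w i = 1.
  rewrite (bigID (fun i : 'I_(size P) => P`_i != p)) /=.
  rewrite [X in _ + X]big1 => [|i /negPf]; last by rewrite /w => ->.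
  under eq_bigr => i Pi do rewrite /w Pi.
  by rewrite addr0 -mulr_suml mulfV ?gt_eqF.
suff {2}-> : p = \sum_i w i *: P`_i.
  by apply: conv_hull_convex => // i /wP /conv_hull_mem.
rewrite (bigID (fun i : 'I_(size P) => P`_i != p)) /=.
rewrite [X in _ + X]big1 => [|i /negPf]; last by rewrite /w => ->; rewrite scale0r.
under eq_bigr => i Pi do rewrite /w Pi mulrC -scalerA.
by rewrite addr0 -scaler_sumr rest scalerA mulVf ?scale1r ?gt_eqF.
Qed.

Lemma conv_hull_drop_nonvertex P p :
  p \in P -> ~ is_vertex (conv_hull P) p -> conv_hull [seq y <- P | y != p] p.
Proof.
move=> pP nv; apply: NNPP => nc; apply: nv; split; first exact: conv_hull_mem.
move=> _ _ t [a [a0 [a1 ->]]] [b [b0 [b1 ->]]] /andP[t0 t1] pE.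
pose g i := t * a i + (1 - t) * b i.
have g0 i : 0 <= g i by rewrite addr_ge0 // mulr_ge0 // ?subr_ge0 ltW.
have g1 : \sum_i g i = 1.
  by rewrite big_split /= -!mulr_sumr a1 b1 !mulr1 addrC subrK.
have pg : p = \sum_i g i *: P`_i.
  rewrite pE /g; under [RHS]eq_bigr => i _ do rewrite scalerDl -!scalerA.
  by rewrite big_split /= -!scaler_sumr.
have ab0 (i : 'I_(size P)) : P`_i != p -> a i = 0 /\ b i = 0.
  move=> Pi; have gi0 : g i = 0.
    apply: NNPP => /eqP gi0; apply: nc.
    by apply: (conv_hull_filter_neq g0 g1 pg); exists i.
  have := a0 i; have := b0 i; rewrite /g in gi0; split; nra.
by split; apply: sum_scale_support1 => // i /ab0 [].
Qed.

Lemma is_vertex_eq (X Y : 'rV[R]_d -> Prop) x :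
  (forall y, X y <-> Y y) -> is_vertex X x -> is_vertex Y x.
Proof.
move=> XY [/XY Yx xext]; split=> // y z t /XY Xy /XY Xz; exact: xext.
Qed.

Lemma conv_hull_vertices P : exists V,
  (forall v, v \in V -> is_vertex (conv_hull P) v) /\
  (forall x, conv_hull P x -> conv_hull V x).
Proof.
have [n] := ubnP (size P); elim: n P => // n IH P /ltnSE sizeP.
have [[p [pP nv]] | allv] :=
    classic (exists p, p \in P /\ ~ is_vertex (conv_hull P) p); last first.
  by exists P; split=> // v vP; apply: NNPP => nv; apply: allv; exists v.
set P' := [seq y <- P | y != p].
have PP' x : conv_hull P x <-> conv_hull P' x.
  split; apply: conv_hull_trans => y; last first.
    by rewrite mem_filter => /andP[_ /conv_hull_mem].
  have [-> _ | yp yP] := eqVneq y p; first exact: conv_hull_drop_nonvertex.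
  by apply: conv_hull_mem; rewrite mem_filter yp.
have [|V [Vvert P'V]] := IH P'.
  rewrite size_filter (leq_trans _ sizeP) // -(count_predC (fun y => y != p) P).
  rewrite -[X in (X < _)%N]addn0 ltn_add2l -has_count.
  by apply/hasP; exists p => //=; rewrite negbK.
exists V; split=> [v /Vvert | x /PP' /P'V //].
by apply: is_vertex_eq => y; rewrite PP'.
Qed.

End ConvexHull.

Section OptimalSpanningSet.
Variables (R : realType) (d : nat).
Implicit Types (X : 'rV[R]_d -> Prop) (s B : seq 'rV[R]_d) (u b x y : 'rV[R]_d).

Lemma dotvB u x y : dotv u (x - y) = dotv u x - dotv u y.
Proof. by rewrite /dotv -sumrB; apply: eq_bigr => i _; rewrite !mxE mulrBr. Qed.

Lemma aff_comb_of_dependence s (S : pred 'rV[R]_d) (w : 'I_(size s) -> R) i0 :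
  uniq s -> \sum_i w i = 0 -> \sum_i w i *: s`_i = 0 -> w i0 != 0 ->
  (forall j, j != i0 -> w j != 0 -> S s`_j) ->
  aff_comb [seq y <- rem s`_i0 s | S y] s`_i0.
Proof.
move=> suniq w0 ws0 wi0 wS; apply/aff_comb_liftv.
have : \sum_i w i *: liftv s`_i = 0.
  by rewrite sum_scale_liftv w0 ws0; apply: row_mx0.
rewrite (bigD1 i0) //= => /eqP; rewrite addr_eq0 => /eqP /(congr1 ( *:%R (w i0)^-1)).
rewrite scalerA mulVf // scale1r => ->.
rewrite memvZ // memvN rpred_sum // => j ji0.
have [-> | wj0] := eqVneq (w j) 0; first by rewrite scale0r mem0v.
rewrite memvZ // memv_span // map_f // mem_filter wS // mem_rem_uniq // inE mem_nth //.
by rewrite nth_uniq // andbT; apply: contra ji0 => /eqP/val_inj ->.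
Qed.

Lemma optimal_spanning_set_rem X u B b :
  optimal_spanning_set X u B -> b \in B ->
  aff_comb [seq y <- rem b B | dotv u b <= dotv u y] b ->
  optimal_spanning_set X u (rem b B).
Proof.
move=> [Buniq [BX Bspan]] bB bspan; split; first exact: rem_uniq.
split=> [y | x /Bspan]; first by rewrite mem_rem_uniq // => /andP[_ /BX].
apply: aff_comb_trans => y; rewrite mem_filter => /andP[uxy yB].
have [yb | yb] := eqVneq y b; last first.
  by apply: aff_comb_mem; rewrite mem_filter uxy mem_rem_uniq // inE yb.
rewrite yb in uxy *; apply: aff_comb_sub bspan => z.
rewrite !mem_filter => /andP[ubz ->]; rewrite andbT.
by rewrite dotvB subr_ge0 (le_trans _ ubz) // -subr_ge0 -dotvB.
Qed.

Lemma minimal_optimal_spanning_set_aff_indep X u B :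
  minimal_optimal_spanning_set X u B -> aff_indep B.
Proof.
move=> [Bopt Bmin] w w0 wB0 i; apply: NNPP => /eqP wi_neq0.
have [i0 wi0_neq0 i0_min] :=
  arg_minP (P := fun j => w j != 0) (fun j => dotv u B`_j) wi_neq0.
have i0B : B`_i0 \in B by rewrite mem_nth.
have [Buniq _] := Bopt.
apply: (Bmin (rem B`_i0 B)); first exact: rem_uniq.
- by move=> y; rewrite mem_rem_uniq // => /andP[].
- by move=> /(_ _ i0B); rewrite mem_rem_uniq // inE eqxx.
apply: optimal_spanning_set_rem => //.
by apply: (aff_comb_of_dependence (w := w)) => // j _; apply: i0_min.
Qed.

End OptimalSpanningSet.

Theorem mainTheorem11 (R : realType) (d : nat) (P : seq 'rV[R]_d)
    (u : 'rV[R]_d) (B : seq 'rV[R]_d) :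
  full_dimensional (conv_hull P) ->
  minimal_optimal_spanning_set (conv_hull P) u B ->
  size B = d.+1 /\ affine_basis (conv_hull P) B.
Proof.
move=> Pfull Bmin; have Bindep := minimal_optimal_spanning_set_aff_indep Bmin.
have [[_ [BP Bspan]] _] := Bmin.
have [V [Vvert PV]] := conv_hull_vertices P.
have Bfull x : aff_comb B x.
  have [s [sP sx]] := Pfull x.
  apply: aff_comb_trans sx => y /sP /PV /conv_hull_aff_comb.
  apply: aff_comb_trans => v /Vvert /Bspan.
  by apply: aff_comb_sub => z; rewrite mem_filter => /andP[].
split; first exact: size_aff_indep_full.
split=> [// | x]; split=> [xB | _]; last exact: Bfull.
by exists B.
Qed.
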